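(* Let $A$ be an HSD model, and let $\mathbf{E}(A)$ carry its canonical Euclidean Jordan algebra structure. Then: (a) every extremal unital outcome $x\in X(A)$ is a primitive idempotent; (b) if $A$ is uniform, then every unital outcome is extremal, hence a primitive idempotent; (c) if $A$ is both unital and uniform, it is a Jordan model.
   Context: A probabilistic model $A$ (finite-dimensional, state-complete, outcome-closed) has a test space $(X(A),\mathcal{M}(A))$ (tests are sets of outcomes covering $X(A)$) and a closed convex set $\Omega(A)$ of states, each a probability weight summing to $1$ on every test. Each outcome $x$ is identified with its evaluation functional $\hat x\in\mathbf{E}(A)$, where $\mathbf{E}(A)$ is the span of these functionals, ordered by the closed cone $\mathbf{E}(A)_+$ generated by them, with order unit $u=\sum_{x\in E}x$ for any test $E$. $A$ is HSD if the cone $\mathbf{E}(A)_+$ is homogeneous (its order-automorphism group acts transitively on its interior) and self-dual with respect to some inner product. For such $A$, $\mathbf{E}(A)$ carries a canonical Euclidean Jordan algebra product $\bullet$ with identity $u$, whose cone of squares is $\mathbf{E}(A)_+$, and whose trace inner product $\langle a,b\rangle=\mathrm{Tr}(a\bullet b)$ is self-dualizing with $\langle a,u\rangle=\mathrm{Tr}(a)$; states are identified with elements of $\mathbf{E}(A)_+$ via this inner product. An idempotent is $e\in\mathbf{E}(A)_+$ with $e\bullet e=e$; it is primitive if it is non-zero and not a sum of other non-zero idempotents. An outcome $x$ is extremal if it generates an extremal ray of $\mathbf{E}(A)_+$, and unital if some state $\alpha\in\Omega(A)$ has $\alpha(x)=1$. $A$ is unital if all its outcomes are unital. $A$ is uniform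 if all its tests have the same cardinality $n$ and the probability weight $\mu(x)\equiv1/n$ belongs to $\Omega(A)$. A Jordan model is an HSD model in which every outcome in $X(A)$ is a primitive idempotent of $\mathbf{E}(A)$. *)

(* A finite-dimensional probabilistic model is encoded
   concretely: E(A) is identified with 'rV[R]_d (via a basis), outcomes are
   sent to their evaluation functionals  hat x : 'rV_d  (which span E(A)),
   and states are encoded as vectors  a : 'rV_d  of the dual space
   V(A) = E(A)^* (paired with E(A) by the standard dot product), so that the
   probability weight of the state a is  x |-> dotv a (hat x). *)
From HB Require Import structures.
From mathcomp Require Import all_boot all_order all_algebra.
From mathcomp Require Import reals.
Set Implicit Arguments.
Unset Strict Implicit.
Unset Printing Implicit Defensive.
Import Order.TTheory GRing.Theory Num.Theory.
Local Open Scope ring_scope.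

Section Defs.
Variables (R : realType) (d : nat).
Notation vec := 'rV[R]_d.

Definition dotv (a b : vec) : R := \sum_(i < d) a 0 i * b 0 i.

Definition near_vec (e : R) (v w : vec) : Prop :=
  forall i : 'I_d, `|v 0 i - w 0 i| < e.

Definition closed_vec (S : vec -> Prop) : Prop :=
  forall v, (forall e, 0 < e -> exists w, S w /\ near_vec e v w) -> S v.

Definition interior_vec (S : vec -> Prop) (v : vec) : Prop :=
  exists2 e, 0 < e & forall w, near_vec e v w -> S w.

Definition convex_vec (S : vec -> Prop) : Prop :=
  forall a b t, S a -> S b -> 0 <= t <= 1 -> S (t *: a + (1 - t) *: b).

Definition span_vec (S : vec -> Prop) (v : vec) : Prop :=
  exists k (c : 'I_k -> R) (s : 'I_k -> vec),
    (forall i, S (s i)) /\ v = \sum_(i < k) c i *: s i.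

Definition cone_hull (S : vec -> Prop) (v : vec) : Prop :=
  exists k (c : 'I_k -> R) (s : 'I_k -> vec),
    (forall i, 0 <= c i /\ S (s i)) /\ v = \sum_(i < k) c i *: s i.

Definition closure_vec (S : vec -> Prop) (v : vec) : Prop :=
  forall e, 0 < e -> exists w, S w /\ near_vec e v w.

Section Model.
Variables (X : eqType) (M : (seq X) -> Prop) (hat : X -> vec) (Om : vec -> Prop).

Definition pr (a : vec) (x : X) : R := dotv a (hat x).

Definition Epos : vec -> Prop := closure_vec (cone_hull (fun v => exists x, v = hat x)).

Definition is_unit (u : vec) : Prop :=
  forall E, M E -> u = \sum_(x <- E) hat x.

(* A finite-dimensional, state-complete, outcome-closed probabilistic model
   with order unit u (tests are finite sets, given as duplicate-free lists). *)
Definition prob_model (u : vec) : Prop :=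
  (forall E, M E -> uniq E) /\
  (forall x, exists2 E, M E & x \in E) /\
      (forall a, Om a -> (forall x, 0 <= pr a x) /\
                         (forall E, M E -> \sum_(x <- E) pr a x = 1)) /\
  convex_vec Om /\ closed_vec Om /\
      (forall v, span_vec (fun w => exists x, w = hat x) v) /\
      (forall v, span_vec Om v) /\
  is_unit u /\
      (forall a, Om a <-> ((forall e, Epos e -> 0 <= dotv a e) /\ dotv a u = 1)) /\
  closed_vec (fun v => exists x, v = hat x).

Definition order_aut (A : 'M[R]_d) : Prop :=
  A \in unitmx /\ (forall v, Epos (v *m A) <-> Epos v).

Definition homogeneous : Prop :=
  forall a b, interior_vec Epos a -> interior_vec Epos b ->
    exists2 A, order_aut A & a *m A = b.

Definition ipv (G : 'M[R]_d) (a b : vec) : R := (a *m G *m b^T) 0 0.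
Definition inner_product (G : 'M[R]_d) : Prop :=
  G^T = G /\ (forall v, v != 0 -> 0 < ipv G v v).

Definition self_dual : Prop :=
  exists2 G, inner_product G &
    (forall a, Epos a <-> (forall b, Epos b -> 0 <= ipv G a b)).

Definition HSD : Prop := homogeneous /\ self_dual.

Definition EJA_product (jp : vec -> vec -> vec) (u : vec) : Prop :=
  (forall (t : R) a b c, jp (t *: a + b) c = t *: jp a c + jp b c) /\
  (forall a b, jp a b = jp b a) /\
  (forall a b, jp (jp a b) (jp a a) = jp a (jp b (jp a a))) /\
  (forall a, jp u a = a) /\
  (exists2 G, inner_product G &
     forall a b c, ipv G (jp a b) c = ipv G b (jp a c)) /\
  (forall v, Epos v <-> exists a, v = jp a a).

Definition idempotent (jp : vec -> vec -> vec) (e : vec) : Prop :=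
  Epos e /\ jp e e = e.

Definition primitive_idempotent (jp : vec -> vec -> vec) (e : vec) : Prop :=
  [/\ idempotent jp e, e != 0 &
      ~ exists k (f : 'I_k -> vec),
          (forall i, idempotent jp (f i) /\ f i != 0 /\ f i != e) /\
          e = \sum_(i < k) f i].

Definition extremal (v : vec) : Prop :=
  [/\ Epos v, v != 0 &
      forall a b, Epos a -> Epos b -> v = a + b -> exists2 t, 0 <= t & a = t *: v].

Definition unital_outcome (x : X) : Prop := exists2 a, Om a & pr a x = 1.

Definition unital_model : Prop := forall x, unital_outcome x.

Definition uniform : Prop :=
  exists n : nat, (forall E, M E -> size E = n) /\
    exists2 m, Om m & forall x, pr m x = n%:R^-1.

Definition jordan_model (jp : vec -> vec -> vec) : Prop :=
  HSD /\ forall x, primitive_idempotent jp (hat x).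

End Model.
End Defs.

From HB Require Import structures.
From mathcomp Require Import all_boot all_order all_algebra.
From mathcomp Require Import reals complex.
From mathcomp Require Import ring lra zify.
From Stdlib Require Import Classical.
Set Implicit Arguments. Unset Strict Implicit. Unset Printing Implicit Defensive.
Import Order.TTheory GRing.Theory Num.Theory.
Local Open Scope ring_scope.

(* Every element x of the Euclidean Jordan algebra has a spectral decomposition
   x = sum_i lam_i e_i into pairwise orthogonal idempotents summing to u: the
   minimal polynomial p of x generates a real radical ideal, since
   <f(x)^2 + g(x)^2, u> = |f(x)|^2 + |g(x)|^2, so p splits over R with simple
   roots, and the Lagrange interpolation polynomials at these roots evaluate to
   the e_i.  Idempotents are squares, hence lie in E(A)_+, and the Peirce
   decomposition gives <e, w^2> >= 0, i.e. <e, y> >= 0 for y in E(A)_+.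
   (a) If x is extremal, one spectral term is a multiple c f of x; a state with
   value 1 on x, together with u - x >= 0, forces c = 1, so x is idempotent, and
   extremality rules out splitting x into other nonzero idempotents.
   (b) The uniform state m gives every nonzero idempotent at least 1/n, but
   m(x) = 1/n.  A unital outcome has a spectral term with eigenvalue 1, so all
   other terms vanish and x is idempotent; if x = b + c in E(A)_+, the spectral
   idempotents of b are orthogonal to u - x, hence sub-idempotents of x, hence
   equal to x, so b is a multiple of x. *)

Section RealRadical.
Variable R : realType.
Local Notation toC := (real_complex R).

Lemma real_poly_complex_root (q : {poly R}) :
  size q != 1%N -> exists z : R[i], root (map_poly toC q) z.
Proof. by move=> q_n1; apply/closed_rootP; rewrite size_map_poly. Qed.

Lemma root_real_complex (q : {poly R}) (a : R) :
  root (map_poly toC q) (a%:C)%C -> root q a.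
Proof. by rewrite /root horner_map /= fmorph_eq0. Qed.

Lemma size_real_quadratic (a b : R) : size (('X - a%:P) ^+ 2 + (b ^+ 2)%:P) = 3.
Proof. by rewrite size_polyDl ?size_exp_XsubC // size_polyC; case: (_ != 0). Qed.

Lemma dvdp_real_quadratic (q : {poly R}) (a b : R) :
  root (map_poly toC q) (a +i* b)%C -> b != 0 ->
  ('X - a%:P) ^+ 2 + (b ^+ 2)%:P %| q.
Proof.
move=> qz bn0; set Q := _ + _.
have Qz : (map_poly toC Q).[(a +i* b)%C] = 0.
  rewrite /Q rmorphD rmorphXn rmorphB /= map_polyX !map_polyC !hornerE /=.
  by rewrite expr2; simpc; rewrite expr2 addNr.
apply/modp_eq0P; set r := q %% Q.
have size_r : (size r <= 2)%N.
  by have := ltn_modp q Q; rewrite -size_poly_eq0 size_real_quadratic.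
have rz : (map_poly toC r).[(a +i* b)%C] = 0.
  move: qz; rewrite /root {1}(divp_eq q Q) rmorphD rmorphM /= hornerD hornerM.
  by rewrite Qz mulr0 add0r => /eqP.
move: rz; rewrite (@horner_coef_wide _ 2) ?size_map_poly // !big_ord_recr big_ord0.
rewrite /= !coef_map /= expr0 expr1.
change ((0 +i* 0)%C + (r`_0 +i* 0)%C * (1 +i* 0)%C + (r`_1 +i* 0)%C * (a +i* b)%C
  = (0 +i* 0)%C -> r = 0).
simpc => /eqP; rewrite eq_complex /= => /andP[/eqP re0].
rewrite mulf_eq0 (negbTE bn0) orbF => /eqP r1_0.
move: re0; rewrite r1_0 mul0r addr0 => r0_0.
apply/polyP => -[|[|i]]; rewrite coef0 //.
by rewrite nth_default // (leq_trans size_r).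
Qed.

Section RealRadicalIdeal.
Variable p : {poly R}.
Hypothesis p_neq0 : p != 0.
Hypothesis p_real_radical : forall f g : {poly R}, p %| f * f + g * g -> p %| f.

Lemma real_radical_ndvd_sqr (r : R) (h : {poly R}) : p <> ('X - r%:P) ^+ 2 * h.
Proof.
move=> def_p; have h_neq0 : h != 0 by apply: contra p_neq0; rewrite def_p => /eqP->; rewrite mulr0.
have : p %| ('X - r%:P) * h.
  apply: (@p_real_radical _ 0); rewrite mul0r addr0.
  have -> : ('X - r%:P) * h * (('X - r%:P) * h) = p * h by rewrite def_p; ring.
  exact: dvdp_mulr.
have Xr_neq0 : 'X - r%:P != 0 by rewrite polyXsubC_eq0.
move/(dvdp_leq (mulf_neq0 Xr_neq0 h_neq0)).
rewrite def_p !size_mul ?expf_neq0 ?polyXsubC_eq0 ?mulf_neq0 // !size_XsubC.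
by rewrite -size_poly_gt0 in h_neq0; lia.
Qed.

Lemma real_radical_ndvd_quadratic (a b : R) :
  b != 0 -> ~~ (('X - a%:P) ^+ 2 + (b ^+ 2)%:P %| p).
Proof.
move=> bn0; apply/negP => /dvdpP [h def_p].
have h_neq0 : h != 0 by apply: contra p_neq0; rewrite def_p => /eqP->; rewrite mul0r.
have : p %| ('X - a%:P) * h.
  apply: (@p_real_radical _ (b%:P * h)).
  have -> : ('X - a%:P) * h * (('X - a%:P) * h) + b%:P * h * (b%:P * h) = p * h.
    by rewrite def_p rmorphXn /=; ring.
  exact: dvdp_mulr.
have Xa_neq0 : 'X - a%:P != 0 by rewrite polyXsubC_eq0.
move/(dvdp_leq (mulf_neq0 Xa_neq0 h_neq0)).
rewrite def_p !size_mul ?size_real_quadratic ?size_XsubC ?polyXsubC_eq0 //;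
  last by rewrite -size_poly_eq0 size_real_quadratic.
by rewrite -size_poly_gt0 in h_neq0; lia.
Qed.

Lemma dvdp_real_radical_split (q : {poly R}) : q %| p -> q != 0 ->
  exists c (rs : seq R), uniq rs /\ q = c *: \prod_(r <- rs) ('X - r%:P).
Proof.
elim: {q}(size q) {-2}q (leqnn (size q)) => [|n IH] q size_q q_p q_neq0.
  by move: size_q; rewrite leqn0 size_poly_eq0 (negbTE q_neq0).
have [q1|q_n1] := eqVneq (size q) 1%N.
  exists q`_0, [::]; split => //.
  by rewrite big_nil {1}(size1_polyC (eq_leq q1)) -mul_polyC mulr1.
have [[a b] qz] := real_poly_complex_root q_n1.
have [b0|bn0] := eqVneq b 0; last first.
  by have := @real_radical_ndvd_quadratic a b bn0; rewrite (dvdp_trans (dvdp_real_quadratic qz bn0)).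
rewrite b0 in qz; have /factor_theorem [q' def_q] := root_real_complex qz.
have q'_neq0 : q' != 0 by apply: contra q_neq0; rewrite def_q => /eqP->; rewrite mul0r.
have q'_p : q' %| p by apply: dvdp_trans q_p; rewrite def_q dvdp_mulIl.
have size_q' : (size q' <= n)%N.
  by move: size_q; rewrite def_q size_mul ?polyXsubC_eq0 // size_XsubC addn2.
have [c [rs [uniq_rs def_q']]] := IH q' size_q' q'_p q'_neq0.
have c_neq0 : c != 0.
  by apply: contra q_neq0 => /eqP c0; rewrite def_q def_q' c0 scale0r mul0r.
have a_rs : a \notin rs.
  apply/negP => a_rs; have : ('X - a%:P) ^+ 2 %| p.
    apply: dvdp_trans q_p; rewrite def_q def_q' (big_rem a a_rs) /= -scalerAl dvdpZr //.
    by rewrite mulrC mulrA expr2 dvdp_mulr.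
  by case/dvdpP => h def_p; apply: (@real_radical_ndvd_sqr a h); rewrite def_p mulrC.
exists c, (a :: rs); split; first by rewrite /= a_rs.
by rewrite def_q def_q' big_cons -scalerAl mulrC.
Qed.

End RealRadicalIdeal.
End RealRadical.

Section InnerProduct.
Variables (R : realType) (d : nat) (G : 'M[R]_d).
Implicit Types (a b c : 'rV[R]_d).

Lemma ipvDl a b c : ipv G (a + b) c = ipv G a c + ipv G b c.
Proof. by rewrite /ipv !mulmxDl mxE. Qed.
Lemma ipvZl t a c : ipv G (t *: a) c = t * ipv G a c.
Proof. by rewrite /ipv -!scalemxAl mxE. Qed.
Lemma ipvNl a c : ipv G (- a) c = - ipv G a c.
Proof. by rewrite -scaleN1r ipvZl mulN1r. Qed.
Lemma ipvBl a b c : ipv G (a - b) c = ipv G a c - ipv G b c.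
Proof. by rewrite ipvDl ipvNl. Qed.
Lemma ipv0l c : ipv G 0 c = 0.
Proof. by rewrite -(scale0r 0) ipvZl mul0r. Qed.

Lemma ipvDr a b c : ipv G c (a + b) = ipv G c a + ipv G c b.
Proof. by rewrite /ipv linearD /= mulmxDr mxE. Qed.
Lemma ipvZr t a c : ipv G c (t *: a) = t * ipv G c a.
Proof. by rewrite /ipv linearZ /= -scalemxAr mxE. Qed.
Lemma ipvNr a c : ipv G c (- a) = - ipv G c a.
Proof. by rewrite -scaleN1r ipvZr mulN1r. Qed.
Lemma ipvBr a b c : ipv G c (a - b) = ipv G c a - ipv G c b.
Proof. by rewrite ipvDr ipvNr. Qed.
Lemma ipv0r c : ipv G c 0 = 0.
Proof. by rewrite -(scale0r 0) ipvZr mul0r. Qed.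

Lemma ipv_sumr I (r : seq I) (P : pred I) (F : I -> 'rV[R]_d) c :
  ipv G c (\sum_(i <- r | P i) F i) = \sum_(i <- r | P i) ipv G c (F i).
Proof. by elim/big_rec2: _ => [|i y1 y2 _ <-]; rewrite ?ipv0r ?ipvDr. Qed.

Lemma ipv_dotv a b : ipv G a b = dotv (a *m G) b.
Proof.
by rewrite /ipv /dotv [LHS]mxE; apply: eq_bigr => i _; congr (_ * _); rewrite mxE.
Qed.

Hypothesis G_ip : inner_product G.

Lemma ipvC a b : ipv G a b = ipv G b a.
Proof.
have [trG _] := G_ip; rewrite /ipv.
transitivity ((a *m G *m b^T)^T 0 0); first by rewrite [RHS]mxE.
by rewrite !trmx_mul trmxK trG mulmxA.
Qed.

Lemma ipv_gt0 a : a != 0 -> 0 < ipv G a a.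
Proof. by have [_] := G_ip; apply. Qed.
Lemma ipv_ge0 a : 0 <= ipv G a a.
Proof. by have [->|/ipv_gt0/ltW //] := eqVneq a 0; rewrite ipv0l. Qed.
Lemma ipv_eq0 a : ipv G a a = 0 -> a = 0.
Proof. by have [//|/ipv_gt0/lt0r_neq0/eqP] := eqVneq a 0. Qed.

End InnerProduct.

Section DotProduct.
Variables (R : realType) (d : nat).
Implicit Types (a b c : 'rV[R]_d).

Lemma dotvE a b : dotv a b = ipv 1%:M a b.
Proof. by rewrite ipv_dotv mulmx1. Qed.

Lemma dotvZl t a c : dotv (t *: a) c = t * dotv a c.
Proof. by rewrite !dotvE ipvZl. Qed.
Lemma dotvBl a b c : dotv (a - b) c = dotv a c - dotv b c.
Proof. by rewrite !dotvE ipvBl. Qed.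
Lemma dotvZr t a c : dotv c (t *: a) = t * dotv c a.
Proof. by rewrite !dotvE ipvZr. Qed.
Lemma dotvBr a b c : dotv c (a - b) = dotv c a - dotv c b.
Proof. by rewrite !dotvE ipvBr. Qed.
Lemma dotv0r c : dotv c 0 = 0.
Proof. by rewrite dotvE ipv0r. Qed.
Lemma dotv_sumr I (r : seq I) (P : pred I) (F : I -> 'rV[R]_d) c :
  dotv c (\sum_(i <- r | P i) F i) = \sum_(i <- r | P i) dotv c (F i).
Proof. by rewrite dotvE ipv_sumr; apply: eq_bigr => i _; rewrite dotvE. Qed.

Lemma closure_dotv_ge0 c (S : 'rV[R]_d -> Prop) v :
  (forall w, S w -> 0 <= dotv c w) -> closure_vec S v -> 0 <= dotv c v.
Proof.
move=> S_ge0 v_cl; rewrite leNgt; apply/negP => cv_lt0.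
set K := \sum_i `|c 0 i| + 1.
have K_gt0 : 0 < K by rewrite ltr_wpDl ?sumr_ge0.
have cv_gt0 : 0 < - dotv c v by rewrite oppr_gt0.
have [w [Sw near_vw]] := v_cl (- dotv c v / K) (divr_gt0 cv_gt0 K_gt0).
have := S_ge0 w Sw; rewrite leNgt => /negP; apply.
have : dotv c w - dotv c v <= \sum_i `|c 0 i| * (- dotv c v / K).
  rewrite /dotv -sumrB; apply: ler_sum => i _.
  rewrite -mulrBr (le_trans (ler_norm _)) // normrM ler_wpM2l //.
  by rewrite distrC ltW // near_vw.
have : \sum_i `|c 0 i| * (- dotv c v / K) < - dotv c v.
  by rewrite -mulr_suml mulrA ltr_pdivrMr // /K; nra.
lra.
Qed.

End DotProduct.

Section PositiveCone.
Variables (R : realType) (d : nat) (X : eqType) (hat : X -> 'rV[R]_d).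
Local Notation Ep := (Epos hat).

Lemma Epos_hat x : Ep (hat x).
Proof.
move=> eps eps_gt0; exists (hat x); split; last by move=> i; rewrite subrr normr0.
exists 1%N, (fun _ => 1), (fun _ => hat x); split; first by split => //; exists x.
by rewrite big_ord1 scale1r.
Qed.

Hypothesis Epos_self_dual : self_dual hat.

Lemma Epos_add a b : Ep a -> Ep b -> Ep (a + b).
Proof.
case: Epos_self_dual => G' _ dualG; rewrite !dualG => Ea Eb c Ec.
by rewrite ipvDl addr_ge0 ?Ea ?Eb.
Qed.
Lemma Epos_scale t a : 0 <= t -> Ep a -> Ep (t *: a).
Proof.
case: Epos_self_dual => G' _ dualG; rewrite !dualG => t_ge0 Ea c Ec.
by rewrite ipvZl mulr_ge0 ?Ea.
Qed.
Lemma Epos0 : Ep 0.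
Proof. by case: Epos_self_dual => G' _ ->; move=> c _; rewrite ipv0l. Qed.
Lemma Epos_sum I (r : seq I) (P : pred I) (F : I -> 'rV[R]_d) :
  (forall i, P i -> Ep (F i)) -> Ep (\sum_(i <- r | P i) F i).
Proof.
move=> EF; elim/big_rec: _ => [|i y Pi Ey]; first exact: Epos0.
exact: Epos_add (EF i Pi) Ey.
Qed.

End PositiveCone.

Section JordanAlgebra.
Variables (R : realType) (d : nat).
Local Notation vec := 'rV[R]_d.
Variables (jp : vec -> vec -> vec) (u : vec) (G : 'M[R]_d).
Local Notation "a \oj b" := (jp a b) (at level 40, left associativity).
Local Notation ip := (ipv G).
Hypothesis jp_linear : forall (t : R) a b c, (t *: a + b) \oj c = t *: (a \oj c) + b \oj c.
Hypothesis jpC : forall a b, a \oj b = b \oj a.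
Hypothesis jordan_identity : forall a b, (a \oj b) \oj (a \oj a) = a \oj (b \oj (a \oj a)).
Hypothesis jp1l : forall a, u \oj a = a.
Hypothesis G_ip : inner_product G.
Hypothesis ip_jp_assoc : forall a b c, ip (a \oj b) c = ip b (a \oj c).

Lemma jpDl a b c : (a + b) \oj c = a \oj c + b \oj c.
Proof. by have := jp_linear 1 a b c; rewrite !scale1r. Qed.
Lemma jp0l c : 0 \oj c = 0.
Proof. by apply: (@addrI _ (0 \oj c)); rewrite -jpDl !addr0. Qed.
Lemma jpZl t a c : (t *: a) \oj c = t *: (a \oj c).
Proof. by have := jp_linear t a 0 c; rewrite !addr0 jp0l addr0. Qed.
Lemma jpNl a c : (- a) \oj c = - (a \oj c).
Proof. by rewrite -scaleN1r jpZl scaleN1r. Qed.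
Lemma jpBl a b c : (a - b) \oj c = a \oj c - b \oj c.
Proof. by rewrite jpDl jpNl. Qed.
Lemma jpDr a b c : c \oj (a + b) = c \oj a + c \oj b.
Proof. by rewrite jpC jpDl !(jpC c). Qed.
Lemma jpZr t a c : c \oj (t *: a) = t *: (c \oj a).
Proof. by rewrite jpC jpZl jpC. Qed.
Lemma jpNr a c : c \oj (- a) = - (c \oj a).
Proof. by rewrite jpC jpNl jpC. Qed.
Lemma jpBr a b c : c \oj (a - b) = c \oj a - c \oj b.
Proof. by rewrite jpDr jpNr. Qed.
Lemma jp0r c : c \oj 0 = 0.
Proof. by rewrite jpC jp0l. Qed.
Lemma jp1r a : a \oj u = a.
Proof. by rewrite jpC jp1l. Qed.
Lemma jp_suml I (r : seq I) (P : pred I) (F : I -> vec) c :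
  (\sum_(i <- r | P i) F i) \oj c = \sum_(i <- r | P i) (F i \oj c).
Proof. by elim/big_rec2: _ => [|i y1 y2 _ <-]; rewrite ?jp0l ?jpDl. Qed.
Lemma jp_sumr I (r : seq I) (P : pred I) (F : I -> vec) c :
  c \oj (\sum_(i <- r | P i) F i) = \sum_(i <- r | P i) (c \oj F i).
Proof. by rewrite jpC jp_suml; apply: eq_bigr => i _; rewrite jpC. Qed.

(* The Jordan identity linearized in its first argument. *)
Lemma jordan_identity_lin a z w :
  ((a \oj a) \oj z) \oj w = (a \oj a) \oj (z \oj w) + 2 *: ((a \oj z) \oj (a \oj w))
     - 2 *: (a \oj (z \oj (a \oj w))).
Proof.
have h1 := jordan_identity (a + w) z; have h2 := jordan_identity (a - w) z.
have h3 := jordan_identity w z.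
rewrite !jpDl !jpDr (jpC w a) in h1; rewrite !jpBl !jpBr (jpC w a) in h2.
rewrite (jpC (a \oj a) z) (jpC _ w) (jpC (a \oj a)) (jpC z w).
apply/rowP => i; move/rowP/(_ i): h1; move/rowP/(_ i): h2; move/rowP/(_ i): h3.
rewrite !mxE; lra.
Qed.

Lemma ip_sqr_u a : ip (a \oj a) u = ip a a.
Proof. by rewrite ip_jp_assoc jp1r. Qed.

Section Idempotent.
Variable e : vec.
Hypothesis e_idem : e \oj e = e.

Lemma idem_mul_cubic w : e \oj w = 3 *: (e \oj (e \oj w)) - 2 *: (e \oj (e \oj (e \oj w))).
Proof.
have := jordan_identity_lin e e w; rewrite !e_idem => {1}->.
by apply/rowP => i; rewrite !mxE; lra.
Qed.

Lemma ip_idem_sqr w : ip e (w \oj w) =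
  ip (e \oj w) (e \oj w) + 4 * ip (e \oj w - e \oj (e \oj w)) (e \oj w - e \oj (e \oj w)).
Proof.
set A := e \oj w; set B := e \oj A; set C := e \oj B; set D := e \oj C.
have AA : ip A A = ip B w by rewrite [RHS]ip_jp_assoc.
have AB : ip A B = ip C w by rewrite [RHS]ip_jp_assoc ipvC.
have BB : ip B B = ip D w by rewrite [RHS]ip_jp_assoc /C ip_jp_assoc.
have Aw : ip A w = 3 * ip B w - 2 * ip C w by rewrite {1}/A idem_mul_cubic ipvBl !ipvZl.
have Bw : ip B w = 3 * ip C w - 2 * ip D w by rewrite {1}/B idem_mul_cubic ipvBl !ipvZl.
have eww : ip e (w \oj w) = ip A w by rewrite /A jpC ip_jp_assoc.
rewrite eww !ipvBl !ipvBr (ipvC G_ip B A) AA AB BB; lra.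
Qed.

Lemma ip_idem_sqr_ge0 w : 0 <= ip e (w \oj w).
Proof. by rewrite ip_idem_sqr addr_ge0 ?mulr_ge0 ?ipv_ge0. Qed.

Lemma ip_idem_sqr_eq0 w : ip e (w \oj w) = 0 -> e \oj w = 0.
Proof.
rewrite ip_idem_sqr => H; apply: (ipv_eq0 G_ip); apply/eqP.
by rewrite eq_le ipv_ge0 // andbT -H lerDl mulr_ge0 ?ipv_ge0.
Qed.

End Idempotent.

Definition spectral_decomp (x : vec) k (lam : 'I_k -> R) (e : 'I_k -> vec) :=
  [/\ forall i, e i \oj e i = e i, forall i j, i != j -> e i \oj e j = 0,
      \sum_i e i = u & \sum_i lam i *: e i = x].

Section Powers.
Variable x : vec.

Definition jpow n := iter n (jp x) u.

Lemma jpowS n : jpow n.+1 = x \oj jpow n. Proof. by []. Qed.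
Lemma jpow1 : jpow 1 = x. Proof. exact: jp1r. Qed.

Lemma jp_sqr_comm w : x \oj ((x \oj x) \oj w) = (x \oj x) \oj (x \oj w).
Proof. by rewrite (jpC (x \oj x) (x \oj w)) jordan_identity (jpC w). Qed.

Lemma jp_sqr_jpow n : (x \oj x) \oj jpow n = jpow n.+2.
Proof.
elim: n => [|n IH]; first by rewrite jp1r jpowS jpow1.
by rewrite jpowS -jp_sqr_comm IH.
Qed.

(* L_v commutes with L_x and L_(x^2); this invariant propagates along the powers
   of x and makes polynomial evaluation at x multiplicative. *)
Definition operator_commutes (v : vec) := forall w,
  v \oj (x \oj w) = x \oj (v \oj w) /\ v \oj ((x \oj x) \oj w) = (x \oj x) \oj (v \oj w).

Lemma jpow_operator_commutes n : operator_commutes (jpow n).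
Proof.
suff: operator_commutes (jpow n) /\ operator_commutes (jpow n.+1) by case.
elim: n => [|n [IHn IHn1]].
  by split=> w; rewrite ?jpow1 ?jp1l // jp_sqr_comm.
split=> // w.
have jpowSS v : jpow n.+2 \oj v = (x \oj x) \oj (jpow n \oj v)
    + 2 *: (jpow n.+1 \oj (x \oj v)) - 2 *: (x \oj (jpow n \oj (x \oj v))).
  by rewrite -jp_sqr_jpow jordan_identity_lin jpowS.
split; rewrite !jpowSS !jpDr !jpNr !jpZr.
- rewrite (proj1 (IHn1 (x \oj w))) (proj1 (IHn (x \oj w))) (proj1 (IHn w)).
  by rewrite -jp_sqr_comm.
- rewrite (proj2 (IHn w)) jp_sqr_comm (proj2 (IHn1 (x \oj w))) (proj2 (IHn (x \oj w))).
  by rewrite jp_sqr_comm.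
Qed.

Definition peval (p : {poly R}) : vec := \sum_(i < size p) p`_i *: jpow i.

Lemma peval_widen (p : {poly R}) n :
  (size p <= n)%N -> peval p = \sum_(i < n) p`_i *: jpow i.
Proof.
move=> le_p_n; rewrite /peval (big_ord_widen n (fun i => p`_i *: jpow i) le_p_n).
rewrite big_mkcond /=; apply: eq_bigr => i _.
by case: ltnP => // /(nth_default 0) ->; rewrite scale0r.
Qed.

Lemma pevalD p q : peval (p + q) = peval p + peval q.
Proof.
set n := maxn (size p) (size q).
rewrite (@peval_widen (p + q) n) ?(@peval_widen p n) ?(@peval_widen q n)
  ?leq_maxl ?leq_maxr ?(leq_trans (size_polyD _ _)) //.
by rewrite -big_split; apply: eq_bigr => i _; rewrite coefD scalerDl.
Qed.
Lemma pevalZ c p : peval (c *: p) = c *: peval p.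
Proof.
rewrite (@peval_widen (c *: p) (size p)) ?size_scale_leq // /peval scaler_sumr.
by apply: eq_bigr => i _; rewrite coefZ scalerA.
Qed.
Lemma peval0 : peval 0 = 0.
Proof. by rewrite /peval size_poly0 big_ord0. Qed.
Lemma pevalN p : peval (- p) = - peval p.
Proof. by rewrite -scaleN1r pevalZ scaleN1r. Qed.
Lemma pevalB p q : peval (p - q) = peval p - peval q.
Proof. by rewrite pevalD pevalN. Qed.
Lemma pevalC c : peval c%:P = c *: u.
Proof. by rewrite (@peval_widen _ 1) ?size_polyC ?leq_b1 // big_ord1 coefC. Qed.
Lemma peval1 : peval 1 = u.
Proof. by rewrite -(scale1r u) -pevalC. Qed.
Lemma peval_sum I (r : seq I) (P : pred I) (F : I -> {poly R}) :
  peval (\sum_(i <- r | P i) F i) = \sum_(i <- r | P i) peval (F i).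
Proof. by elim/big_rec2: _ => [|i y1 y2 _ <-]; rewrite ?peval0 ?pevalD. Qed.

Lemma pevalXM p : peval ('X * p) = x \oj peval p.
Proof.
rewrite (@peval_widen _ (size p).+1); last first.
  by rewrite mulrC (leq_trans (size_polyMleq _ _)) // size_polyX addn2.
rewrite big_ord_recl coefXM /= scale0r add0r /peval jp_sumr.
by apply: eq_bigr => i _; rewrite coefXM /= jpZr.
Qed.
Lemma pevalX : peval 'X = x.
Proof. by rewrite -(mulr1 'X) pevalXM peval1 jp1r. Qed.

Lemma peval_operator_commutes p : operator_commutes (peval p).
Proof.
move=> w; rewrite /peval !jp_suml !jp_sumr; split; apply: eq_bigr => i _;
  rewrite !jpZl jpZr; congr (_ *: _); by case: (jpow_operator_commutes i w).
Qed.

Lemma pevalM p q : peval (p * q) = peval p \oj peval q.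
Proof.
elim/poly_ind: p q => [|p c IH] q; first by rewrite mul0r peval0 jp0l.
rewrite mulrDl -mulrA pevalD IH mul_polyC pevalZ pevalXM.
rewrite pevalD pevalC jpDl jpZl jp1l (mulrC p) pevalXM; congr (_ + _).
rewrite (proj1 (peval_operator_commutes p _)) (jpC (x \oj peval p)).
by rewrite (proj1 (peval_operator_commutes q _)) (jpC (peval q)).
Qed.

Lemma exists_annihilating_poly : exists2 p : {poly R}, p != 0 & peval p = 0.
Proof.
pose A : 'M[R]_(d.+1, d) := \matrix_(i < d.+1) jpow i.
have : kermx A != 0.
  by rewrite kermx_eq0 -row_leq_rank -ltnNge ltnS rank_leq_col.
case/rowV0Pn => v /sub_kermxP vA v_neq0.
exists (\poly_(i < d.+1) v 0 (inord i)).
  apply: contra v_neq0 => /eqP p0; apply/eqP/rowP => i.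
  by have := congr1 (fun p : {poly R} => p`_i) p0; rewrite coef_poly ltn_ord coef0 inord_val mxE.
rewrite (@peval_widen _ d.+1) ?size_poly // -[RHS]vA mulmx_sum_row.
by apply: eq_bigr => i _; rewrite coef_poly ltn_ord inord_val rowK.
Qed.

Lemma minimal_annihilating_poly : exists2 p : {poly R}, p != 0 &
  peval p = 0 /\ forall f, peval f = 0 -> p %| f.
Proof.
have [q q_neq0 q_ann] := exists_annihilating_poly.
elim: {q}(size q) {-2}q (leqnn (size q)) q_neq0 q_ann => [|n IH] q size_q q_neq0 q_ann.
  by move: size_q; rewrite leqn0 size_poly_eq0 (negbTE q_neq0).
have [[r [r_neq0 r_ann size_r]]|no_smaller] := classic
  (exists r : {poly R}, [/\ r != 0, peval r = 0 & (size r < size q)%N]).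
  by apply: (IH r) => //; rewrite -ltnS (leq_trans size_r).
exists q => //; split => // f f_ann; apply/modp_eq0P/eqP/negbNE/negP => rem_neq0.
apply: no_smaller; exists (f %% q); split; rewrite ?ltn_modp //.
have := congr1 peval (divp_eq f q).
by rewrite pevalD pevalM q_ann jp0r add0r f_ann.
Qed.

Section Lagrange.
Variable rs : seq R.
Hypothesis uniq_rs : uniq rs.
Hypothesis annihilates : forall f : {poly R}, all (root f) rs -> peval f = 0.
Local Notation k := (size rs).

Definition lagrange_poly (i : 'I_k) : {poly R} :=
  \prod_(j < k | j != i) (('X - (rs`_j)%:P) * ((rs`_i - rs`_j)^-1)%:P).

Lemma lagrange_poly_nodes (i m : 'I_k) : (lagrange_poly i).[rs`_m] = (i == m)%:R.
Proof.
rewrite /lagrange_poly horner_prod; have [<-|im] := eqVneq i m.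
  apply: big1 => j ji; rewrite hornerM hornerXsubC hornerC divff // subr_eq0.
  by apply: contra ji => /eqP rsij; rewrite -val_eqE /= -(nth_uniq 0 _ _ uniq_rs) ?rsij.
by rewrite (bigD1 m) 1?eq_sym //= hornerM hornerXsubC subrr !mul0r.
Qed.

Lemma annihilates_nodes (f : {poly R}) :
  (forall m : 'I_k, f.[rs`_m] = 0) -> peval f = 0.
Proof.
move=> f_rs; apply: annihilates; apply/allP => r /(nthP 0) [m lt_m_k <-].
by rewrite /root (f_rs (Ordinal lt_m_k)).
Qed.

Lemma lagrange_spectral_decomp : spectral_decomp x (fun i => rs`_i) (fun i => peval (lagrange_poly i)).
Proof.
split.
- move=> i; rewrite -pevalM; apply/eqP; rewrite -subr_eq0 -pevalB.
  apply/eqP/annihilates_nodes => m.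
  by rewrite hornerD hornerN hornerM lagrange_poly_nodes; case: (i == m); rewrite ?mulr1 ?mulr0 subrr.
- move=> i j ij; rewrite -pevalM; apply: annihilates_nodes => m.
  rewrite hornerM !lagrange_poly_nodes; have [<-|] := eqVneq i m; last by rewrite mul0r.
  by rewrite eq_sym (negbTE ij) mulr0.
- apply/eqP; rewrite -subr_eq0 -peval_sum -peval1 -pevalB.
  apply/eqP/annihilates_nodes => m; rewrite hornerD hornerN horner_sum hornerC.
  rewrite (bigD1 m) //= lagrange_poly_nodes eqxx big1 ?addr0 ?subrr // => j jm.
  by rewrite lagrange_poly_nodes (negbTE jm).
- apply/eqP; rewrite -subr_eq0.
  have -> : \sum_(i < k) rs`_i *: peval (lagrange_poly i)
      = peval (\sum_(i < k) rs`_i *: lagrange_poly i).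
    by rewrite peval_sum; apply: eq_bigr => i _; rewrite pevalZ.
  rewrite -{1}pevalX -pevalB; apply/eqP/annihilates_nodes => m.
  rewrite hornerD hornerN horner_sum hornerX (bigD1 m) //= hornerZ lagrange_poly_nodes eqxx.
  rewrite mulr1 big1 ?addr0 ?subrr // => j jm.
  by rewrite hornerZ lagrange_poly_nodes (negbTE jm) mulr0.
Qed.

End Lagrange.

Theorem spectral_decomposition : exists k (lam : 'I_k -> R) (e : 'I_k -> vec),
  spectral_decomp x lam e.
Proof.
have [p p_neq0 [p_ann p_min]] := minimal_annihilating_poly.
have p_real_radical f g : p %| f * f + g * g -> p %| f.
  case/dvdpP => h def_fg; apply: p_min; apply: (ipv_eq0 G_ip); apply/eqP.
  have : ip (peval (f * f + g * g)) u = 0 by rewrite def_fg pevalM p_ann jp0r ipv0l.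
  rewrite pevalD !pevalM ipvDl !ip_sqr_u => fg0.
  by rewrite eq_le ipv_ge0 // andbT -fg0 lerDl ipv_ge0.
have [c [rs [uniq_rs def_p]]] := dvdp_real_radical_split p_neq0 p_real_radical (dvdpp p) p_neq0.
have c_neq0 : c != 0 by apply: contra p_neq0 => /eqP c0; rewrite def_p c0 scale0r.
exists (size rs), (fun i => rs`_i), (fun i : 'I_(size rs) => peval (lagrange_poly i)).
apply: lagrange_spectral_decomp => // f /uniq_roots_dvdp.
rewrite uniq_rootsE => /(_ uniq_rs) /dvdpP [h ->].
by rewrite pevalM -[\prod_(z <- rs) _](scalerK c_neq0) -def_p pevalZ p_ann scaler0 jp0r.
Qed.

End Powers.

Section Model.
Variables (X : eqType) (M : seq X -> Prop) (hat : X -> vec) (Om : vec -> Prop).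
Local Notation Ep := (Epos hat).
Hypothesis Epos_sqr : forall v, Ep v <-> exists a, v = a \oj a.
Hypothesis Epos_self_dual : self_dual hat.
Hypothesis outcome_in_test : forall x, exists2 E, M E & x \in E.
Hypothesis u_unit : is_unit M hat u.
Hypothesis state_complete :
  forall a, Om a <-> (forall e, Ep e -> 0 <= dotv a e) /\ dotv a u = 1.

Lemma Epos_idem e : e \oj e = e -> Ep e.
Proof. by move=> e_idem; apply/Epos_sqr; exists e. Qed.

Lemma Epos_u_sub_hat x : Ep (u - hat x).
Proof.
have [E ME xE] := outcome_in_test x.
rewrite (u_unit ME) (big_rem x xE) /= addrAC subrr add0r.
by apply: (Epos_sum Epos_self_dual) => y _; apply: Epos_hat.
Qed.

Lemma ip_idem_Epos_ge0 e y : e \oj e = e -> Ep y -> 0 <= ip e y.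
Proof. by move=> e_idem /Epos_sqr [w ->]; apply: ip_idem_sqr_ge0. Qed.

Lemma state_Epos_ge0 a y : Om a -> Ep y -> 0 <= dotv a y.
Proof. by case/state_complete => + _; apply. Qed.
Lemma state_u a : Om a -> dotv a u = 1.
Proof. by case/state_complete. Qed.

Lemma idem_u_sub f : f \oj f = f -> (u - f) \oj (u - f) = u - f.
Proof.
move=> f_idem; rewrite jpBl !jpBr !jp1l jp1r f_idem.
by apply/rowP => i; rewrite !mxE; lra.
Qed.

Lemma ip_idem_u f : f \oj f = f -> ip f u = ip f f.
Proof. by move=> f_idem; rewrite -{1}f_idem ip_jp_assoc jp1r. Qed.

Section Spectral.
Variables (y : vec) (k : nat) (lam : 'I_k -> R) (e : 'I_k -> vec).
Hypothesis y_spec : spectral_decomp y lam e.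

Lemma ip_spectral_idem i : ip (e i) y = lam i * ip (e i) (e i).
Proof.
have [e_idem e_orth _ <-] := y_spec.
rewrite ipv_sumr (bigD1 i) //= ipvZr big1 ?addr0 // => j ji.
by rewrite ipvZr -e_idem ip_jp_assoc e_orth 1?eq_sym // ipv0r mulr0.
Qed.

Lemma spectral_coef_ge0 i : Ep y -> e i != 0 -> 0 <= lam i.
Proof.
have [e_idem _ _ _] := y_spec; move=> Ey ei_neq0.
have := ip_idem_Epos_ge0 (e_idem i) Ey.
by rewrite ip_spectral_idem pmulr_lge0 // ipv_gt0.
Qed.

Lemma spectral_coef_le1 i : Ep (u - y) -> e i != 0 -> lam i <= 1.
Proof.
have [e_idem _ _ _] := y_spec; move=> Euy ei_neq0.
have := ip_idem_Epos_ge0 (e_idem i) Euy.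
rewrite ipvBr ip_idem_u // ip_spectral_idem.
by have := ipv_gt0 G_ip ei_neq0; nra.
Qed.

Lemma Epos_spectral_term i : Ep y -> Ep (lam i *: e i).
Proof.
have [e_idem _ _ _] := y_spec; move=> Ey.
have [->|ei_neq0] := eqVneq (e i) 0; first by rewrite scaler0; exact: (Epos0 Epos_self_dual).
by apply: (Epos_scale Epos_self_dual); [exact: spectral_coef_ge0 | exact: Epos_idem].
Qed.

Lemma unital_spectral_coef1 a : Om a -> dotv a y = 1 -> Ep y -> Ep (u - y) ->
  exists2 i, lam i = 1 & dotv a (e i) != 0.
Proof.
have [e_idem _ sum_e def_y] := y_spec; move=> Oa ay1 Ey Euy.
have terms_ge0 i : 0 <= (1 - lam i) * dotv a (e i).
  have [->|ei_neq0] := eqVneq (e i) 0; first by rewrite dotv0r mulr0.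
  apply: mulr_ge0; first by rewrite subr_ge0 spectral_coef_le1.
  exact: state_Epos_ge0 Oa (Epos_idem (e_idem i)).
have terms_sum0 : \sum_i (1 - lam i) * dotv a (e i) = 0.
  have : dotv a u - dotv a y = 0 by rewrite (state_u Oa) ay1 subrr.
  rewrite -sum_e -def_y !dotv_sumr -sumrB => sum0; rewrite -[RHS]sum0.
  apply: eq_bigr => i _.
  by rewrite dotvZr mulrBl mul1r.
have [i ai_neq0] : exists i, dotv a (e i) != 0.
  apply: NNPP => all0; have := state_u Oa.
  rewrite -sum_e dotv_sumr big1 => [/eqP|i _]; first by rewrite eq_sym oner_eq0.
  by apply/eqP; apply: contraT => ne0; exfalso; apply: all0; exists i.
exists i => //; have /eqP := @psumr_eq0P _ _ _ _ (fun i _ => terms_ge0 i) terms_sum0 i isT.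
by rewrite mulf_eq0 (negbTE ai_neq0) orbF subr_eq0 => /eqP <-.
Qed.

End Spectral.

Lemma extremal_spectral_multiple y : extremal hat y ->
  exists c f, [/\ f \oj f = f, f != 0 & y = c *: f].
Proof.
case=> Ey y_neq0 y_extremal.
have [k [lam [e y_spec]]] := spectral_decomposition y.
have [e_idem _ _ def_y] := y_spec.
have [i lei_neq0] : exists i, lam i *: e i != 0.
  apply/existsP; apply: contraR y_neq0; rewrite negb_exists => /forallP lame0.
  by rewrite -def_y big1 // => i _; apply/eqP; move: (lame0 i); rewrite negbK.
have Erest : Ep (\sum_(j | j != i) lam j *: e j).
  by apply: (Epos_sum Epos_self_dual) => j _; apply: Epos_spectral_term y_spec _ Ey.
have [t _ def_lei] := y_extremal _ _ (Epos_spectral_term y_spec i Ey) Erest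
  (etrans (esym def_y) (bigD1 i isT)).
have t_neq0 : t != 0 by apply: contra lei_neq0 => /eqP t0; rewrite def_lei t0 scale0r.
exists (lam i / t), (e i); split => //.
  by apply: contra lei_neq0 => /eqP->; rewrite scaler0.
by rewrite mulrC -scalerA def_lei scalerA mulVf // scale1r.
Qed.

Lemma extremal_unital_idem x a : extremal hat (hat x) -> Om a -> pr hat a x = 1 ->
  hat x \oj hat x = hat x.
Proof.
move=> x_extremal Oa ax1; rewrite /pr in ax1.
have [c [f [f_idem f_neq0 def_x]]] := extremal_spectral_multiple x_extremal.
suff c1 : c = 1 by rewrite def_x c1 scale1r.
have c_le1 : c <= 1.
  have := ip_idem_Epos_ge0 f_idem (Epos_u_sub_hat x).
  rewrite ipvBr ip_idem_u // def_x ipvZr.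
  by have := ipv_gt0 G_ip f_neq0; nra.
have c_ge1 : 1 <= c.
  have caf1 : c * dotv a f = 1 by rewrite -dotvZr -def_x.
  have af_gt0 : 0 < dotv a f.
    rewrite lt_def (state_Epos_ge0 Oa (Epos_idem f_idem)) andbT.
    by apply/eqP => af0; move: caf1; rewrite af0 mulr0 => /eqP; rewrite eq_sym oner_eq0.
  rewrite -(ler_pM2r af_gt0) mul1r caf1.
  have := state_Epos_ge0 Oa (Epos_idem (idem_u_sub f_idem)).
  by rewrite dotvBr (state_u Oa) subr_ge0.
by apply/eqP; rewrite eq_le c_le1 c_ge1.
Qed.

Lemma extremal_idem_primitive y : extremal hat y -> y \oj y = y ->
  primitive_idempotent hat jp y.
Proof.
case=> Ey y_neq0 y_extremal y_idem; split => //; case=> -[|k] [f [f_idem def_y]].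
  by move/eqP: y_neq0; rewrite def_y big_ord0.
move: def_y; rewrite big_ord_recl => def_y.
have [[Ef0 f0_idem] [f0_neq0 f0_neqy]] := f_idem ord0.
have Erest : Ep (\sum_(i < k) f (lift ord0 i)).
  by apply: (Epos_sum Epos_self_dual) => i _; have [[] ] := f_idem (lift ord0 i).
have [s _ def_f0] := y_extremal _ _ Ef0 Erest def_y.
have : (s * s - s) *: y = 0.
  by rewrite scalerBl -scalerA -{2}def_f0 -f0_idem def_f0 jpZl jpZr y_idem subrr.
move/eqP; rewrite scaler_eq0 (negbTE y_neq0) orbF subr_eq0 => /eqP ss.
have /eqP : s * (s - 1) = 0 by rewrite mulrBr mulr1 ss subrr.
rewrite mulf_eq0 subr_eq0 => /orP[/eqP s0|/eqP s1].
  by move/eqP: f0_neq0; apply; rewrite def_f0 s0 scale0r.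
by move/eqP: f0_neqy; apply; rewrite def_f0 s1 scale1r.
Qed.

Section Uniform.
Variables (n : nat) (m : vec).
Hypothesis tests_size : forall E, M E -> size E = n.
Hypothesis m_state : Om m.
Hypothesis m_uniform : forall x, pr hat m x = n%:R^-1.

Lemma uniform_inv_gt0 (x : X) : 0 < n%:R^-1 :> R.
Proof.
have [E ME xE] := outcome_in_test x.
by rewrite invr_gt0 ltr0n -(tests_size ME); case: E xE {ME}.
Qed.

(* The functional m - n^-1 <f, .>/<f, f> is nonnegative on every outcome,
   because <f, hat y> <= <f, u> = <f, f>; hence it is nonnegative on E(A)_+,
   in particular on f itself. *)
Lemma uniform_idem_ge f : f \oj f = f -> f != 0 -> n%:R^-1 <= dotv m f.
Proof.
move=> f_idem f_neq0; have ff_gt0 := ipv_gt0 G_ip f_neq0.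
set phi := m - (n%:R^-1 / ip f f) *: (f *m G).
have phiE v : dotv phi v = dotv m v - n%:R^-1 / ip f f * ip f v.
  by rewrite /phi dotvBl dotvZl [ip f v]ipv_dotv.
suff : 0 <= dotv phi f by rewrite phiE -mulrA mulVf ?lt0r_neq0 // mulr1 subr_ge0.
apply: closure_dotv_ge0 (Epos_idem f_idem) => _ [k [c [s [cs_ge0 ->]]]].
rewrite dotv_sumr; apply: sumr_ge0 => i _.
have [c_ge0 [y ->]] := cs_ge0 i; rewrite dotvZr mulr_ge0 // phiE.
have := ip_idem_Epos_ge0 f_idem (Epos_u_sub_hat y).
rewrite ipvBr ip_idem_u // subr_ge0 => fy_le_ff.
have fy_le1 : ip f (hat y) / ip f f <= 1 by rewrite ler_pdivrMr // mul1r.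
have := m_uniform y; rewrite /pr => ->.
rewrite mulrAC -mulrA -[X in 0 <= X - _](mulr1 n%:R^-1) -mulrBr.
by rewrite mulr_ge0 ?invr_ge0 ?subr_ge0.
Qed.

Lemma uniform_unital_idem x a : Om a -> pr hat a x = 1 -> hat x \oj hat x = hat x.
Proof.
set y := hat x; move=> Oa ax1; rewrite /pr -/y in ax1.
have [k [lam [e y_spec]]] := spectral_decomposition y.
have [e_idem _ _ def_y] := y_spec.
have [i lami1 aei_neq0] :=
  unital_spectral_coef1 y_spec Oa ax1 (Epos_hat hat x) (Epos_u_sub_hat x).
have ei_neq0 : e i != 0 by apply: contra aei_neq0 => /eqP->; rewrite dotv0r.
have my : dotv m y = n%:R^-1 by have := m_uniform x.
have mterms_ge0 j : 0 <= lam j * dotv m (e j).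
  have [->|ej_neq0] := eqVneq (e j) 0; first by rewrite dotv0r mulr0.
  apply: mulr_ge0; first exact: spectral_coef_ge0 y_spec _ (Epos_hat hat x) ej_neq0.
  exact: state_Epos_ge0 m_state (Epos_idem (e_idem j)).
have rest0 : \sum_(j | j != i) lam j * dotv m (e j) = 0.
  apply/eqP; rewrite eq_le sumr_ge0 // andbT.
  have : dotv m y = lam i * dotv m (e i) + \sum_(j | j != i) lam j * dotv m (e j).
    by rewrite -def_y dotv_sumr (bigD1 i) //=; under eq_bigr do rewrite dotvZr; rewrite dotvZr.
  by rewrite lami1 mul1r my; have := uniform_idem_ge (e_idem i) ei_neq0; lra.
suff -> : y = e i by [].
rewrite -def_y (bigD1 i) //= lami1 scale1r big1 ?addr0 // => j ji.
have [->|ej_neq0] := eqVneq (e j) 0; first by rewrite scaler0.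
have /eqP := @psumr_eq0P _ _ _ _ (fun j _ => mterms_ge0 j) rest0 j ji.
rewrite mulf_eq0 => /orP[/eqP->|/eqP mej0]; first by rewrite scale0r.
by have := uniform_idem_ge (e_idem j) ej_neq0; rewrite mej0 leNgt uniform_inv_gt0.
Qed.

(* hat x - g is again an idempotent, and m cannot give at least 1/n to both it
   and g while m (hat x) = 1/n. *)
Lemma uniform_subidem_eq x g : hat x \oj hat x = hat x ->
  g \oj g = g -> g != 0 -> hat x \oj g = g -> g = hat x.
Proof.
set y := hat x => y_idem g_idem g_neq0 yg.
apply/eqP; rewrite eq_sym -subr_eq0; apply/negP => /negP h_neq0.
have h_idem : (y - g) \oj (y - g) = y - g.
  rewrite jpBl !jpBr y_idem yg (jpC g y) yg g_idem.
  by apply/rowP => i; rewrite !mxE; lra.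
have := uniform_idem_ge h_idem h_neq0; have := uniform_idem_ge g_idem g_neq0.
rewrite dotvBr; have := m_uniform x; have := uniform_inv_gt0 x; rewrite /pr; lra.
Qed.

Lemma uniform_idem_extremal x : hat x \oj hat x = hat x -> extremal hat (hat x).
Proof.
set y := hat x => y_idem; have uy_idem := idem_u_sub y_idem.
have y_neq0 : y != 0.
  apply: contraTneq (uniform_inv_gt0 x) => y0.
  by have := m_uniform x; rewrite /pr -/y y0 dotv0r => <-; rewrite ltxx.
split=> // [|b c Eb Ec def_y]; first exact: Epos_hat.
have ip_uyb : ip (u - y) b = 0.
  have := ip_idem_Epos_ge0 uy_idem Eb; have := ip_idem_Epos_ge0 uy_idem Ec.
  have : ip (u - y) (b + c) = 0 by rewrite -def_y ipvC // ipvBr ip_idem_u // subrr.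
  rewrite ipvDr; lra.
have [k [mu [g b_spec]]] := spectral_decomposition b.
have [g_idem _ _ def_b] := b_spec.
have terms_ge0 j : 0 <= mu j * ip (u - y) (g j).
  have [->|gj_neq0] := eqVneq (g j) 0; first by rewrite ipv0r mulr0.
  apply: mulr_ge0; first exact: spectral_coef_ge0 b_spec _ Eb gj_neq0.
  exact: ip_idem_Epos_ge0 uy_idem (Epos_idem (g_idem j)).
have terms_sum0 : \sum_j mu j * ip (u - y) (g j) = 0.
  by rewrite -[RHS]ip_uyb -def_b ipv_sumr; apply: eq_bigr => j _; rewrite ipvZr.
have term_y j : mu j *: g j = (if g j == y then mu j else 0) *: y.
  have [->//|gj_neqy] := eqVneq (g j) y; rewrite scale0r.
  have [->|gj_neq0] := eqVneq (g j) 0; first by rewrite scaler0.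
  have [->|muj_neq0] := eqVneq (mu j) 0; first by rewrite scale0r.
  have /eqP := @psumr_eq0P _ _ _ _ (fun j _ => terms_ge0 j) terms_sum0 j isT.
  rewrite mulf_eq0 (negbTE muj_neq0) /= -(g_idem j) => /eqP /(ip_idem_sqr_eq0 uy_idem).
  rewrite jpBl jp1l => /subr0_eq /esym /(uniform_subidem_eq y_idem (g_idem j) gj_neq0).
  by move/eqP: gj_neqy.
exists (\sum_j (if g j == y then mu j else 0)).
  apply: sumr_ge0 => j _; case: eqP => // gjy.
  by rewrite (spectral_coef_ge0 b_spec) // gjy.
by rewrite -def_b scaler_suml; apply: eq_bigr => j _; rewrite term_y.
Qed.

End Uniform.

Lemma extremal_unital_primitive x : extremal hat (hat x) -> unital_outcome hat Om x ->
  primitive_idempotent hat jp (hat x).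
Proof.
move=> x_extremal [a Oa ax1].
exact: extremal_idem_primitive x_extremal (extremal_unital_idem x_extremal Oa ax1).
Qed.

Lemma uniform_unital_extremal : uniform M hat Om -> forall x, unital_outcome hat Om x ->
  extremal hat (hat x) /\ primitive_idempotent hat jp (hat x).
Proof.
move=> [n [tests_size [m m_state m_uniform]]] x [a Oa ax1].
have x_idem := uniform_unital_idem tests_size m_state m_uniform Oa ax1.
have x_extremal := uniform_idem_extremal tests_size m_uniform x_idem.
by split; last exact: extremal_idem_primitive.
Qed.

End Model.
End JordanAlgebra.

Theorem lemma8 (R : realType) (d : nat) (X : eqType) (M : seq X -> Prop)
    (hat : X -> 'rV[R]_d) (Om : 'rV[R]_d -> Prop) (u : 'rV[R]_d)
    (jp : 'rV[R]_d -> 'rV[R]_d -> 'rV[R]_d) :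
  prob_model M hat Om u ->
  HSD hat ->
  EJA_product hat jp u ->
  [/\ (forall x : X, extremal hat (hat x) -> unital_outcome hat Om x ->
         primitive_idempotent hat jp (hat x)),
      (uniform M hat Om ->
         forall x : X, unital_outcome hat Om x ->
           extremal hat (hat x) /\ primitive_idempotent hat jp (hat x)) &
      (unital_model hat Om -> uniform M hat Om -> jordan_model hat jp)].
Proof.
move=> [_ [outcome_in_test [_ [_ [_ [_ [_ [u_unit [state_complete _]]]]]]]]] A_HSD.
have [_ Epos_self_dual] := A_HSD.
move=> [jp_linear [jpC [jordan_identity [jp1l [[G G_ip ip_jp_assoc] Epos_sqr]]]]].
have part_a x := extremal_unital_primitive jp_linear jpC jordan_identity jp1l G_ip
  ip_jp_assoc Epos_sqr Epos_self_dual outcome_in_test u_unit state_complete (x := x).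
have part_b := uniform_unital_extremal jp_linear jpC jordan_identity jp1l G_ip
  ip_jp_assoc Epos_sqr Epos_self_dual outcome_in_test u_unit state_complete.
split=> // A_unital A_uniform; split=> // x.
by have [] := part_b A_uniform x (A_unital x).
Qed.
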